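(* Let $(\mathcal G,\lambda)$ be a small morphism-colored groupoid satisfying the inverse-compatibility condition. Then the relation $\overset{0}{\sim}$ on $I_0$ is an equivalence relation.
   Context: A morphism-colored category is a pair $(\mathcal C,\lambda)$ where $\mathcal C$ is a category and $\lambda$ assigns to each morphism $f$ a color $\lambda(f)$, such that: whenever $g,f_1,f_2$ with $(f_1,f_2)$ composable satisfy $\lambda(g)=\lambda(f_1\circ f_2)$, there exist composable $g_1,g_2$ with $g=g_1\circ g_2$, $\lambda(g_1)=\lambda(f_1)$, $\lambda(g_2)=\lambda(f_2)$. It is a morphism-colored groupoid if $\mathcal C$ is a groupoid, and small if $\mathcal C$ is small and $\lambda$ is a map into a set. Inverse-compatibility: $\lambda(f)=\lambda(g)$ implies $\lambda(f^{-1})=\lambda(g^{-1})$. $I_1=\lambda(\mathrm{Mor}(\mathcal G))$, $\lambda_1$ the corestriction of $\lambda$ to $I_1$; $I_0=\{\lambda(\mathrm{id}_x):x\in\mathrm{Obj}(\mathcal G)\}$, $\lambda_0(x)=\lambda(\mathrm{id}_x)$. The equivalence relation $\overset{1}{\sim}$ on $I_1$: $\lambda(f_1\circ\cdots\circ f_l)\overset{1}{\sim}\lambda(g_1\circ\cdots\circ g_l)$ for every $l\ge1$ and all composable sequences with $\lambda(f_i)=\lambda(g_i)$ for all $i$ (no other pairs); $s_1:I_1\to\bar I_1$ the quotient map. The relation $\overset{0}{\sim}$ on $I_0$: declare $\lambda_0(\mathrm{source}(f))\overset{0}{\sim}\lambda_0(\mathrm{source}(g))$ for all $f,g\in\mathrm{Mor}(\mathcal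 G)$ with $(s_1\circ\lambda_1)(f)=(s_1\circ\lambda_1)(g)$ (no other pairs). *)

From Stdlib Require Import List Relations.
Import ListNotations.
Set Implicit Arguments.
Unset Strict Implicit.


(** A small groupoid: a type of objects, a type of morphisms, source/target,
    identities, a composition [comp f g] (= f ∘ g, meaningful when
    [src f = tgt g]) and inverses, with the usual axioms. *)
Record Groupoid := {
  Obj : Type;
  Mor : Type;
  src : Mor -> Obj;
  tgt : Mor -> Obj;
  idm : Obj -> Mor;
  comp : Mor -> Mor -> Mor;
  inv : Mor -> Mor;
  src_id : forall x, src (idm x) = x;
  tgt_id : forall x, tgt (idm x) = x;
  src_comp : forall f g, src f = tgt g -> src (comp f g) = src g;
  tgt_comp : forall f g, src f = tgt g -> tgt (comp f g) = tgt f;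
  comp_id_l : forall f, comp (idm (tgt f)) f = f;
  comp_id_r : forall f, comp f (idm (src f)) = f;
  comp_assoc : forall f g h, src f = tgt g -> src g = tgt h ->
      comp f (comp g h) = comp (comp f g) h;
  src_inv : forall f, src (inv f) = tgt f;
  tgt_inv : forall f, tgt (inv f) = src f;
  inv_l : forall f, comp (inv f) f = idm (src f);
  inv_r : forall f, comp f (inv f) = idm (tgt f)
}.
Arguments src {g0} _. Arguments tgt {g0} _. Arguments idm {g0} _.
Arguments comp {g0} _. Arguments inv {g0} _.

Section Colored.
Variables (G : Groupoid) (I : Type) (lam : Mor G -> I).

Definition morphism_colored : Prop :=
  forall g f1 f2 : Mor G, src f1 = tgt f2 ->
    lam g = lam (comp f1 f2) ->
    exists g1 g2, src g1 = tgt g2 /\ g = comp g1 g2 /\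
                  lam g1 = lam f1 /\ lam g2 = lam f2.

Definition inverse_compatible : Prop :=
  forall f g : Mor G, lam f = lam g -> lam (inv f) = lam (inv g).

Fixpoint composable (f : Mor G) (r : list (Mor G)) : Prop :=
  match r with
  | [] => True
  | f' :: r' => src f = tgt f' /\ composable f' r'
  end.

Fixpoint chain_comp (f : Mor G) (r : list (Mor G)) : Mor G :=
  match r with
  | [] => f
  | f' :: r' => comp f (chain_comp f' r')
  end.

Definition inI1 (i : I) : Prop := exists f : Mor G, lam f = i.

Definition inI0 (i : I) : Prop := exists x : Obj G, lam (idm x) = i.

Definition rel1 (i j : I) : Prop :=
  exists (f : Mor G) (fs : list (Mor G)) (g : Mor G) (gs : list (Mor G)),
    composable f fs /\ composable g gs /\
    Forall2 (fun a b => lam a = lam b) (f :: fs) (g :: gs) /\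
    i = lam (chain_comp f fs) /\ j = lam (chain_comp g gs).

(** s1 i = s1 j: i and j have the same image in the quotient of I_1
    by ~1 (i.e. are related by the equivalence relation generated by ~1). *)
Definition same_s1 (i j : I) : Prop := clos_refl_sym_trans I rel1 i j.

(** The relation ~0 on I_0 (exactly the declared pairs). *)
Definition rel0 (a b : I) : Prop :=
  exists f g : Mor G,
    same_s1 (lam f) (lam g) /\
    a = lam (idm (src f)) /\ b = lam (idm (src g)).

Definition rel0_on_I0 (a b : {i : I | inI0 i}) : Prop :=
  rel0 (proj1_sig a) (proj1_sig b).

End Colored.
Arguments rel0_on_I0 {G I} lam a b.

(* Two morphisms of the same color have inverses of the same color, so the
   composites f^-1 ∘ f and g^-1 ∘ g witness that the identities at their
   sources have ~1-related colors.  Applying this to the two ends of a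
   generating pair of ~1 (whose composable sequences end with morphisms of
   equal color) shows that s1(λ f) = s1(λ g) forces s1(λ id_{src f}) =
   s1(λ id_{src g}).  Hence a ~0 b holds exactly when a, b ∈ I_0 and
   s1 a = s1 b, which is an equivalence relation. *)
From Stdlib Require Import Relations List ssreflect.
Import ListNotations.

Lemma last_cons (A : Type) (x d : A) (l : list A) : last (x :: l) d = last l x.
Proof. elim: l x => [//|y l IH] x; case: l IH => [//|z l] IH; exact: IH. Qed.

Lemma Forall2_last (A B : Type) (R : A -> B -> Prop) (l1 : list A) (l2 : list B) :
  Forall2 R l1 l2 -> forall a b, R a b -> R (last l1 a) (last l2 b).
Proof.
  elim=> [//|x y l1' l2' Rxy _ IH] a b _.
  rewrite !last_cons; exact: IH.
Qed.

Section Colored.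
Variables (G : Groupoid) (I : Type) (lam : Mor G -> I).

Lemma tgt_chain_comp {fs : list (Mor G)} {f : Mor G} :
  composable f fs -> tgt (chain_comp f fs) = tgt f.
Proof.
  elim: fs f => [//|f' fs IH] f /= [Hff' Hfs].
  by apply: tgt_comp; rewrite IH.
Qed.

Lemma src_chain_comp {fs : list (Mor G)} {f : Mor G} :
  composable f fs -> src (chain_comp f fs) = src (last fs f).
Proof.
  elim: fs f => [//|f' fs IH] f [Hff' Hfs].
  by rewrite last_cons /= src_comp ?tgt_chain_comp // IH.
Qed.

Lemma same_s1_equiv : equivalence I (same_s1 lam).
Proof. exact: clos_rst_is_equiv. Qed.

Hypothesis Hinv : inverse_compatible lam.

Lemma rel1_src_id (f g : Mor G) :
  lam f = lam g -> rel1 lam (lam (idm (src f))) (lam (idm (src g))).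
Proof.
  move=> Efg; exists (inv f), [f], (inv g), [g] => /=.
  rewrite !src_inv !inv_l.
  by repeat split; repeat constructor; auto.
Qed.

Lemma same_s1_src_id_of_rel1 (i j : I) (f g : Mor G) :
  rel1 lam i j -> lam f = i -> lam g = j ->
  same_s1 lam (lam (idm (src f))) (lam (idm (src g))).
Proof.
  move=> [f0 [fs [g0 [gs [Cf [Cg [Ecol [-> ->]]]]]]]] Ef Eg.
  have Elast : lam (last fs f0) = lam (last gs g0).
  { inversion Ecol as [|? ? ? ? E0 Ecols]; exact: Forall2_last Ecols _ _ E0. }
  apply: rst_trans; first exact/rst_step/rel1_src_id/Ef.
  rewrite src_chain_comp //.
  apply: rst_trans; first exact/rst_step/rel1_src_id/Elast.
  rewrite -(src_chain_comp Cg).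
  exact/rst_step/rel1_src_id/eq_sym/Eg.
Qed.

Lemma inI1_of_rel1 (i j : I) : rel1 lam i j -> inI1 lam i /\ inI1 lam j.
Proof.
  by move=> [f0 [fs [g0 [gs [_ [_ [_ [-> ->]]]]]]]]; split; eexists.
Qed.

Lemma same_s1_src_id (f g : Mor G) :
  same_s1 lam (lam f) (lam g) ->
  same_s1 lam (lam (idm (src f))) (lam (idm (src g))).
Proof.
  suff chain_ind : forall i j, clos_refl_sym_trans_1n I (rel1 lam) i j ->
      forall f g, lam f = i -> lam g = j ->
      same_s1 lam (lam (idm (src f))) (lam (idm (src g))).
  { by move=> /clos_rst_rst1n_iff Hfg; exact: chain_ind Hfg f g eq_refl eq_refl. }
  move=> i j; elim=> [i' | x y z Hxy _ IH] {}f {}g Ef Eg.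
  - by apply/rst_step/rel1_src_id; rewrite Ef Eg.
  - have [h Eh] : inI1 lam y by case: Hxy => /inI1_of_rel1 [].
    apply: rst_trans (IH h g Eh Eg).
    case: Hxy => [Hxy | Hyx]; first exact: same_s1_src_id_of_rel1 Hxy Ef Eh.
    by apply: rst_sym; apply: same_s1_src_id_of_rel1 Hyx Eh Ef.
Qed.

Lemma rel0E (a b : I) :
  rel0 lam a b <-> inI0 lam a /\ inI0 lam b /\ same_s1 lam a b.
Proof.
  split.
  - move=> [f [g [Hfg [-> ->]]]].
    by split; [|split]; [eexists..|exact: same_s1_src_id].
  - move=> [[x <-] [[y <-] Hab]].
    by exists (idm x), (idm y); rewrite !src_id.
Qed.

End Colored.

Theorem mainTheorem7 (G : Groupoid) (I : Type) (lam : Mor G -> I)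
  (Hcol : morphism_colored lam) (Hinv : inverse_compatible lam) :
  equivalence {i : I | inI0 lam i} (rel0_on_I0 lam).
Proof.
  have [Hrefl Htrans Hsym] := @same_s1_equiv G I lam.
  have rel0_on_I0E (a b : {i : I | inI0 lam i}) :
    rel0_on_I0 lam a b <-> same_s1 lam (proj1_sig a) (proj1_sig b).
  { case: a b => [a Ha] [b Hb]; rewrite /rel0_on_I0 rel0E //=; tauto. }
  split.
  - by move=> a; apply/rel0_on_I0E.
  - move=> a b c /rel0_on_I0E Hab /rel0_on_I0E Hbc; apply/rel0_on_I0E; exact: Htrans Hbc.
  - by move=> a b /rel0_on_I0E Hab; apply/rel0_on_I0E; apply: Hsym.
Qed.
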